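(* Let $(G,v)$ be a Hamel space over an ordered field $C$ and let $P\subseteq G$ be a downward closed subset of $(G,<_0)$. Then there are an extension $(G',v')$ of $(G,v)$ and an element $h\in G'$ such that (1) $h=v'(h)$; (2) $P<_0h<_0G\setminus P$; and (3) for any embedding of Hamel spaces $i:(G,v)\to(G^*,v^* )$ and any $h^*\in G^*$ with $i(P)<_0h^*=v^*(h^* )<_0 i(G\setminus P)$, there is an extension of $i$ to an embedding $(G',v')\to(G^*,v^* )$ sending $h$ to $h^*$.
   Context: Let $C$ be an ordered field. A $2$-ordered $C$-vector space is a $C$-vector space $G$ with two total orderings $<_0,<_1$ such that $G$ is an ordered $C$-vector space with respect to each. Put $G_\infty=G\cup\{\infty\}$, with $G<_0\infty$, $G<_1\infty$. A Hamel valuation on $G$ is a map $v:G\to G_\infty$ such that for all $x,y\in G$ and $\lambda\in C^{\times}$: $v(x)=\infty$ iff $x=0$; $v(x+y)\ge_0\min_0(v(x),v(y))$; $v(\lambda x)=v(x)$; if $0<_1x<_1y$ then $v(x)\ge_0v(y)$; $v(v(x))=v(x)$ (with $v(\infty)=\infty$); and $v(x)>_10$. A Hamel space is such a pair $(G,v)$. $(G',v')$ is an extension of $(G,v)$ if $G$ is a $C$-subspace of $G'$, both orderings on $G$ are restrictions of those on $G'$, and $v'(x)=v(x)$ for $x\in G$. An embedding $i:(G,v)\to(G',v')$ is an injective $C$-linear map preserving $<_0$ and $<_1$ with $i(v(x))=v'(i(x))$ for all $x\in G$ (and $i(\infty)=\infty$). *)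

From HB Require Import structures.
From mathcomp Require Import all_boot all_order all_algebra.
Set Implicit Arguments. Unset Strict Implicit. Unset Printing Implicit Defensive.
Import Order.TTheory GRing.Theory Num.Theory.
Local Open Scope ring_scope.

(* G_infty = option G, with None playing the role of infinity. *)

Section Hamel.
Variable C : realFieldType.

Definition ordered_vspace (V : lmodType C) (lt : V -> V -> Prop) : Prop :=
  [/\ (forall x, ~ lt x x),
      (forall x y z, lt x y -> lt y z -> lt x z),
      (forall x y, x <> y -> lt x y \/ lt y x),
      (forall x y z, lt x y -> lt (x + z) (y + z)) &
      (forall (a : C) x, 0 < a -> lt 0 x -> lt 0 (a *: x))].

Definition ltinf (V : Type) (lt : V -> V -> Prop) (a b : option V) : Prop :=
  match a, b with
  | Some a', Some b' => lt a' b'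
  | Some _, None => True
  | None, _ => False
  end.

Definition leinf (V : Type) (lt : V -> V -> Prop) (a b : option V) : Prop :=
  a = b \/ ltinf lt a b.

Definition vinf (V : Type) (v : V -> option V) (a : option V) : option V :=
  match a with Some x => v x | None => None end.

Definition is_hamel (V : lmodType C) (lt0 lt1 : V -> V -> Prop)
    (v : V -> option V) : Prop :=
  ordered_vspace lt0 /\ ordered_vspace lt1 /\
  (forall x, v x = None <-> x = 0) /\
  (forall x y, leinf lt0 (v x) (v (x + y)) \/ leinf lt0 (v y) (v (x + y))) /\
  (forall (a : C) x, a != 0 -> v (a *: x) = v x) /\
  (forall x y, lt1 0 x -> lt1 x y -> leinf lt0 (v y) (v x)) /\
  (forall x, vinf v (v x) = v x) /\
  (forall x, ltinf lt1 (Some 0) (v x)).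

Definition hamel_embedding (V W : lmodType C)
    (lt0 lt1 : V -> V -> Prop) (v : V -> option V)
    (mu0 mu1 : W -> W -> Prop) (w : W -> option W) (i : V -> W) : Prop :=
  [/\ (forall (a : C) x y, i (a *: x + y) = a *: i x + i y),
      injective i,
      (forall x y, lt0 x y -> mu0 (i x) (i y)),
      (forall x y, lt1 x y -> mu1 (i x) (i y)) &
      (forall x, omap i (v x) = w (i x))].

End Hamel.

(* Put [G' = G + C h].  For [<_0], [h] fills the cut [P].  For [<_1] and the
   valuation, [v'(h) = h] lies strictly between [P] and [G \ P], so an element
   [g] of [G] with [v(g)] in [P] is infinitely larger than [h] and any other is
   infinitely smaller: the [<_1]-sign and the valuation of [g + l h] are those
   of its leading part, [g] or [l h].  The Hamel axioms for [G'] reduce to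
   those of [G] through this case distinction.  Given [i] and [h*], the map
   [g + l h |-> i(g) + l h*] is the required embedding: the same leading-term
   comparisons hold in [G*], because in a Hamel space the summand of smaller
   valuation determines both the valuation and the [<_1]-sign of a sum. *)

From HB Require Import structures.
From mathcomp Require Import all_boot all_order all_algebra.
From Stdlib Require Import Classical ClassicalEpsilon.
Set Implicit Arguments. Unset Strict Implicit. Unset Printing Implicit Defensive.
Import Order.TTheory GRing.Theory Num.Theory.
Local Open Scope ring_scope.

Section StrictTotalOrder.
Variables (T : Type) (lt : T -> T -> Prop).

Definition strict_total_order : Prop :=
  [/\ forall x, ~ lt x x,
      forall x y z, lt x y -> lt y z -> lt x z &
      forall x y, x <> y -> lt x y \/ lt y x].

Definition le_of (x y : T) : Prop := x = y \/ lt x y.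

Hypothesis so : strict_total_order.

Lemma so_irr x : ~ lt x x. Proof. by case: so. Qed.

Lemma so_trans x y z : lt x y -> lt y z -> lt x z.
Proof. by case: so => _ + _; apply. Qed.

Lemma so_total x y : x <> y -> lt x y \/ lt y x.
Proof. by case: so => _ _; apply. Qed.

Lemma so_asym x y : lt x y -> ~ lt y x.
Proof. by move=> xy yx; apply: so_irr (so_trans xy yx). Qed.

Lemma so_trichotomy x y : [\/ x = y, lt x y | lt y x].
Proof. by have [->|/so_total[]] := classic (x = y); constructor. Qed.

Lemma so_le_total x y : le_of x y \/ le_of y x.
Proof. by case: (so_trichotomy x y) => [->|xy|yx]; [left; left|left; right|right; right]. Qed.

Lemma so_le_lt_trans x y z : le_of x y -> lt y z -> lt x z.
Proof. by case=> [->//|]; apply: so_trans. Qed.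

Lemma so_lt_le_trans x y z : lt x y -> le_of y z -> lt x z.
Proof. by move=> xy [<-//|]; apply: so_trans. Qed.

Lemma so_le_trans x y z : le_of x y -> le_of y z -> le_of x z.
Proof. by case=> [->//|xy] yz; right; apply: so_lt_le_trans yz. Qed.

Lemma so_le_nlt x y : le_of x y -> ~ lt y x.
Proof. by case=> [->|]; [apply: so_irr|apply: so_asym]. Qed.

Lemma so_le_antisym x y : le_of x y -> le_of y x -> x = y.
Proof. by move=> xy [//|yx]; case: (so_le_nlt xy yx). Qed.

End StrictTotalOrder.

Lemma ltinf_sto (V : Type) (lt : V -> V -> Prop) :
  strict_total_order lt -> strict_total_order (ltinf lt).
Proof.
move=> so; split.
- by case=> //=; apply: so_irr.
- by case=> [x|] [y|] [z|] //=; apply: so_trans.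
- case=> [x|] [y|] //= xy; try tauto.
  by apply: so_total => // exy; apply: xy; rewrite exy.
Qed.

Section OrderedVspace.
Variables (C : realFieldType) (V : lmodType C) (lt : V -> V -> Prop).
Hypothesis ov : ordered_vspace lt.
Local Notation le := (le_of lt).

Lemma ov_sto : strict_total_order lt.
Proof. by case: ov => irr trans total _ _; split. Qed.

Lemma ov_add x y z : lt x y -> lt (x + z) (y + z).
Proof. by case: ov => _ _ _ + _; apply. Qed.

Lemma ov_scale (a : C) x : 0 < a -> lt 0 x -> lt 0 (a *: x).
Proof. by case: ov => _ _ _ _; apply. Qed.

Lemma ov_subr_gt0 x y : lt 0 (y - x) <-> lt x y.
Proof.
split=> [/(ov_add x)|/(ov_add (- x))]; first by rewrite add0r subrK.
by rewrite subrr.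
Qed.

Lemma ov_oppr_gt0 x : lt 0 (- x) <-> lt x 0.
Proof. by rewrite -[lt x 0]ov_subr_gt0 sub0r. Qed.

Lemma ov_addr_gt0 a b : lt 0 a -> lt 0 b -> lt 0 (a + b).
Proof. by move=> a0 /(ov_add a); rewrite add0r addrC; apply: (so_trans ov_sto) a0. Qed.

Lemma ov_addr_gt0_ge0 a b : lt 0 a -> le 0 b -> lt 0 (a + b).
Proof. by move=> a0 [<-|]; [rewrite addr0 | apply: ov_addr_gt0]. Qed.

Lemma ov_addr_ge0 a b : le 0 a -> le 0 b -> le 0 (a + b).
Proof. by case=> [<-|a0] b0; [rewrite add0r | right; apply: ov_addr_gt0_ge0]. Qed.

Lemma ov_scale_ge0 (a : C) x : 0 < a -> le 0 x -> le 0 (a *: x).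
Proof. by move=> a0 [<-|x0]; [left; rewrite scaler0 | right; apply: ov_scale]. Qed.

Lemma ov_scale_lt (a : C) x y : 0 < a -> lt x y -> lt (a *: x) (a *: y).
Proof. by move=> a0 /ov_subr_gt0 xy; apply/ov_subr_gt0; rewrite -scalerBr; apply: ov_scale. Qed.

Lemma ov_scale_lt_neg (a : C) x y : a < 0 -> lt x y -> lt (a *: y) (a *: x).
Proof.
rewrite -oppr_gt0 => a0 /(ov_scale_lt a0).
by rewrite !scaleNr => /ov_subr_gt0; rewrite opprK addrC ov_subr_gt0.
Qed.

End OrderedVspace.

Section PositiveCone.
Variables (C : realFieldType) (V : lmodType C) (pos : V -> Prop).
Hypotheses (pos0 : ~ pos 0) (posD : forall a b, pos a -> pos b -> pos (a + b))
  (pos_total : forall x, x <> 0 -> pos x \/ pos (- x))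
  (posZ : forall (a : C) x, 0 < a -> pos x -> pos (a *: x)).

Lemma ordered_vspace_cone : ordered_vspace (fun x y => pos (y - x)).
Proof.
split.
- by move=> x; rewrite subrr.
- by move=> x y z xy yz; have := posD yz xy; rewrite addrA subrK.
- move=> x y xy; rewrite -[x - y]opprB; apply: pos_total.
  by move/eqP; rewrite subr_eq0 => /eqP/esym.
- by move=> x y z; rewrite opprD addrACA subrr addr0.
- by move=> a x a0; rewrite !subr0; apply: posZ.
Qed.

End PositiveCone.

Section HamelSpace.
Variables (C : realFieldType) (V : lmodType C) (lt0 lt1 : V -> V -> Prop)
  (v : V -> option V).
Hypothesis hamel : is_hamel lt0 lt1 v.

Lemma hamel_ov0 : ordered_vspace lt0. Proof. by case: hamel. Qed.
Lemma hamel_ov1 : ordered_vspace lt1. Proof. by case: hamel => _ []. Qed.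

Lemma hamel_v_eq0 x : v x = None <-> x = 0.
Proof. by case: hamel => _ [_ []]. Qed.

Lemma hamel_v_add x y : leinf lt0 (v x) (v (x + y)) \/ leinf lt0 (v y) (v (x + y)).
Proof. by case: hamel => _ [_ [_ []]]. Qed.

Lemma hamel_vZ (a : C) x : a != 0 -> v (a *: x) = v x.
Proof. by case: hamel => _ [_ [_ [_ []]]] vZ _; apply: vZ. Qed.

Lemma hamel_v_mono x y : lt1 0 x -> lt1 x y -> leinf lt0 (v y) (v x).
Proof. by case: hamel => _ [_ [_ [_ [_ []]]]] mono _; apply: mono. Qed.

Lemma hamel_v_fixed x u : v x = Some u -> v u = Some u.
Proof. by case: hamel => _ [_ [_ [_ [_ [_ [/(_ x) + _]]]]]] => /[swap] ->. Qed.

Lemma hamel_v_gt0 x : ltinf lt1 (Some 0) (v x).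
Proof. by case: hamel => _ [_ [_ [_ [_ [_ []]]]]]. Qed.

Let soinf0 := ltinf_sto (ov_sto hamel_ov0).

Lemma hamel_vN x : v (- x) = v x.
Proof. by rewrite -scaleN1r hamel_vZ // oppr_eq0 oner_eq0. Qed.

Lemma hamel_v_addl a b : ltinf lt0 (v a) (v b) -> v (a + b) = v a.
Proof.
move=> ab; have := hamel_v_add (a + b) (- b); rewrite addrK hamel_vN.
case=> [le_ab_a|le_b_a]; last by case: (so_le_nlt soinf0 le_b_a).
case: (hamel_v_add a b) => [le_a_ab|le_b_ab].
  exact: (so_le_antisym soinf0 le_ab_a le_a_ab).
by case: (so_le_nlt soinf0 (so_le_trans soinf0 le_b_ab le_ab_a)).
Qed.

Lemma hamel_gt0_addl a b : lt1 0 a -> ltinf lt0 (v a) (v b) -> lt1 0 (a + b).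
Proof.
move=> a0 ab; have so1 := ov_sto hamel_ov1.
case: (so_trichotomy so1 (a + b) 0) => [/eqP|/(ov_add hamel_ov1 (- b))|//].
  by rewrite addr_eq0 => /eqP a_eq; move: ab; rewrite a_eq hamel_vN => /(so_irr soinf0).
rewrite addrK sub0r => a_lt_Nb.
by have := hamel_v_mono a0 a_lt_Nb; rewrite hamel_vN => /(so_le_nlt soinf0).
Qed.

End HamelSpace.

Section Embedding.
Variables (C : realFieldType) (V W : lmodType C) (lt0 lt1 : V -> V -> Prop)
  (v : V -> option V) (mu0 mu1 : W -> W -> Prop) (w : W -> option W) (i : V -> W).
Hypothesis emb : hamel_embedding lt0 lt1 v mu0 mu1 w i.

Lemma emb_linear (a : C) x y : i (a *: x + y) = a *: i x + i y.
Proof. by case: emb. Qed.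
Lemma emb_inj : injective i. Proof. by case: emb. Qed.
Lemma emb_lt0 x y : lt0 x y -> mu0 (i x) (i y). Proof. by case: emb => _ _ + _ _; apply. Qed.
Lemma emb_lt1 x y : lt1 x y -> mu1 (i x) (i y). Proof. by case: emb => _ _ _ + _; apply. Qed.
Lemma emb_v x : omap i (v x) = w (i x). Proof. by case: emb. Qed.

Lemma emb_le0 x y : le_of lt0 x y -> le_of mu0 (i x) (i y).
Proof. by case=> [->|/emb_lt0]; [left | right]. Qed.

Lemma emb0 : i 0 = 0.
Proof.
have := emb_linear 1 0 0; rewrite !scale1r addr0 => e.
by apply: (@addrI _ (i 0)); rewrite addr0 -e.
Qed.
Lemma embD x y : i (x + y) = i x + i y. Proof. by have := emb_linear 1 x y; rewrite !scale1r. Qed.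
Lemma embZ (a : C) x : i (a *: x) = a *: i x.
Proof. by rewrite -[a *: x]addr0 emb_linear emb0 addr0. Qed.

End Embedding.

Section CutExtension.
Variables (C : realFieldType) (G : lmodType C) (lt0 lt1 : G -> G -> Prop)
  (v : G -> option G).
Hypothesis hamelG : is_hamel lt0 lt1 v.
Variable P : G -> Prop.
Hypothesis P_down : forall x y, P y -> lt0 x y -> P x.

Let ov0 := hamel_ov0 hamelG.
Let ov1 := hamel_ov1 hamelG.
Let so0 := ov_sto ov0.
Let so1 := ov_sto ov1.
Local Notation le0 := (le_of lt0).

Lemma cut_lt p q : P p -> ~ P q -> lt0 p q.
Proof.
move=> Pp nPq; case: (so_trichotomy so0 p q) => [e|//|/(P_down Pp)//].
by case: nPq; rewrite -e.
Qed.

Lemma leinf_cut a u : leinf lt0 a (Some u) -> P u -> exists2 w, a = Some w & P w.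
Proof.
case=> [->|]; first by exists u.
by case: a => //= w wu Pu; exists w => //; apply: P_down Pu wu.
Qed.

(* [v g] lies below [v'(h) = h]: for [<_1], [g] is infinitely larger than [h]
   (and every other nonzero [g] is infinitely smaller). *)
Definition dominant (g : G) : Prop := exists2 u, v g = Some u & P u.

Lemma dominant_le a b : leinf lt0 (v a) (v b) -> dominant b -> dominant a.
Proof. by move=> ab [u vb Pu]; move: ab; rewrite vb => /leinf_cut; apply. Qed.

Lemma dominant0 : ~ dominant 0.
Proof. by case=> u; rewrite (proj2 (hamel_v_eq0 hamelG 0)). Qed.

Lemma dominantZ (a : C) g : a != 0 -> dominant (a *: g) <-> dominant g.
Proof. by move=> a0; rewrite /dominant (hamel_vZ hamelG). Qed.

Lemma not_dominant_v_gt u g : P u -> ~ dominant g -> ltinf lt0 (Some u) (v g).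
Proof.
case E: (v g) => [w|//] Pu ndg /=; apply: cut_lt => // Pw.
by apply: ndg; exists w.
Qed.

Lemma not_dominantD g g' : ~ dominant g -> ~ dominant g' -> ~ dominant (g + g').
Proof.
move=> ndg ndg' dgg'.
by case: (hamel_v_add hamelG g g') => /dominant_le/(_ dgg').
Qed.

Lemma v_dominantD g s : dominant g -> ~ dominant s -> v (g + s) = v g.
Proof.
move=> [u vg Pu] nds; apply: (hamel_v_addl hamelG).
by rewrite vg; apply: not_dominant_v_gt.
Qed.

Lemma dominantD g s : dominant g -> ~ dominant s -> dominant (g + s).
Proof. by move=> dg nds; rewrite /dominant v_dominantD. Qed.

Lemma dominantD_gt0 g s : lt1 0 g -> dominant g -> ~ dominant s -> lt1 0 (g + s).
Proof.
move=> g0 [u vg Pu] nds; apply: (hamel_gt0_addl hamelG) => //.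
by rewrite vg; apply: not_dominant_v_gt.
Qed.

Lemma dominant_addr_gt0 a b : lt1 0 a -> lt1 0 b -> dominant a -> dominant (a + b).
Proof.
move=> a0 b0; apply: dominant_le; apply: (hamel_v_mono hamelG a0).
by apply/(ov_subr_gt0 ov1); rewrite [a + b]addrC addrK.
Qed.

Definition G' : lmodType C := (G * C^o)%type.
Definition j (g : G) : G' := (g, 0).
Definition h : G' := (0, 1).

Definition eval_at (x : G') (w : G) : G := x.1 + x.2 *: w.

(* [x = (g, l)] stands for [g + l h], and [pos0 x] says [g + l h > 0]: for
   [l != 0] this is witnessed by a point [w] on the side of the cut given by
   the sign of [l] with [eval_at x w = g + l w >= 0]. *)
Definition pos0 (x : G') : Prop :=
  [\/ x.2 = 0 /\ lt0 0 x.1,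
      0 < x.2 /\ exists2 p, P p & le0 0 (eval_at x p) |
      x.2 < 0 /\ exists2 q, ~ P q & le0 0 (eval_at x q)].

Lemma eval_atD x y w : eval_at (x + y) w = eval_at x w + eval_at y w.
Proof. by rewrite /eval_at /= scalerDl addrACA. Qed.

Lemma eval_atN x w : eval_at (- x) w = - eval_at x w.
Proof. by rewrite /eval_at /= scaleNr opprD. Qed.

Lemma eval_atZ (a : C) x w : eval_at (a *: x) w = a *: eval_at x w.
Proof. by rewrite /eval_at /= scalerDr scalerA. Qed.

Lemma eval_at_base x w : x.2 = 0 -> eval_at x w = x.1.
Proof. by rewrite /eval_at => ->; rewrite scale0r addr0. Qed.

Lemma eval_at_root x : x.2 != 0 -> eval_at x (- (x.2^-1 *: x.1)) = 0.
Proof. by move=> x2; rewrite /eval_at scalerN scalerA mulfV // scale1r subrr. Qed.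

Lemma eval_at_lt x a b : 0 < x.2 -> lt0 a b -> lt0 (eval_at x a) (eval_at x b).
Proof.
move=> x2 ab; rewrite /eval_at ![x.1 + _]addrC.
by apply: (ov_add ov0); apply: (ov_scale_lt ov0).
Qed.

Lemma eval_at_lt_neg x a b : x.2 < 0 -> lt0 a b -> lt0 (eval_at x b) (eval_at x a).
Proof.
move=> x2 ab; rewrite /eval_at ![x.1 + _]addrC.
by apply: (ov_add ov0); apply: (ov_scale_lt_neg ov0).
Qed.

Lemma witness_up x a b : 0 < x.2 -> le0 0 (eval_at x a) -> le0 a b -> le0 0 (eval_at x b).
Proof. by move=> x2 xa [<-//|ab]; right; apply: so_le_lt_trans xa (eval_at_lt x2 ab). Qed.

Lemma witness_down x a b : x.2 < 0 -> le0 0 (eval_at x b) -> le0 a b -> le0 0 (eval_at x a).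
Proof. by move=> x2 xb [->//|ab]; right; apply: so_le_lt_trans xb (eval_at_lt_neg x2 ab). Qed.

Lemma pos0_add_base x y : x.2 = 0 -> lt0 0 x.1 -> pos0 y -> pos0 (x + y).
Proof.
move=> x2 x1 [[y2 y1]|[y2 [p Pp yp]]|[y2 [q nPq yq]]].
- by constructor 1; rewrite /= x2 y2 add0r; split => //; apply: (ov_addr_gt0 ov0).
- constructor 2; rewrite /= x2 add0r; split => //; exists p => //; right.
  by rewrite eval_atD eval_at_base //; apply: (ov_addr_gt0_ge0 ov0).
- constructor 3; rewrite /= x2 add0r; split => //; exists q => //; right.
  by rewrite eval_atD eval_at_base //; apply: (ov_addr_gt0_ge0 ov0).
Qed.

Lemma pos0_add_pos x y p p' : 0 < x.2 -> 0 < y.2 -> P p -> P p' ->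
  le0 0 (eval_at x p) -> le0 0 (eval_at y p') -> pos0 (x + y).
Proof.
move=> x2 y2 Pp Pp' xp yp'; constructor 2; split; first exact: addr_gt0.
have [pp'|p'p] := so_le_total so0 p p'; [exists p' | exists p] => //;
  rewrite eval_atD; apply: (ov_addr_ge0 ov0) => //.
- exact: witness_up xp pp'.
- exact: witness_up yp' p'p.
Qed.

Lemma pos0_add_neg x y q q' : x.2 < 0 -> y.2 < 0 -> ~ P q -> ~ P q' ->
  le0 0 (eval_at x q) -> le0 0 (eval_at y q') -> pos0 (x + y).
Proof.
move=> x2 y2 nPq nPq' xq yq'; constructor 3; split.
  by rewrite -oppr_gt0 opprD addr_gt0 // oppr_gt0.
have [qq'|q'q] := so_le_total so0 q q'; [exists q | exists q'] => //;
  rewrite eval_atD; apply: (ov_addr_ge0 ov0) => //.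
- exact: witness_down yq' qq'.
- exact: witness_down xq q'q.
Qed.

Lemma pos0_add_mixed x y p q : 0 < x.2 -> y.2 < 0 -> P p -> ~ P q ->
  le0 0 (eval_at x p) -> le0 0 (eval_at y q) -> pos0 (x + y).
Proof.
move=> x2 y2 Pp nPq xp yq; have pq := cut_lt Pp nPq.
have yp : lt0 0 (eval_at y p) := so_le_lt_trans so0 yq (eval_at_lt_neg y2 pq).
have xq : lt0 0 (eval_at x q) := so_le_lt_trans so0 xp (eval_at_lt x2 pq).
have [s_lt0|s_gt0|s_eq0] := ltgtP (x + y).2 0.
- constructor 3; split => //; exists q => //; right.
  by rewrite eval_atD; apply: (ov_addr_gt0_ge0 ov0).
- constructor 2; split => //; exists p => //; right.
  by rewrite eval_atD addrC; apply: (ov_addr_gt0_ge0 ov0).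
- constructor 1; split => //; rewrite -(eval_at_base p s_eq0) eval_atD addrC.
  exact: (ov_addr_gt0_ge0 ov0).
Qed.

Lemma pos0_add x y : pos0 x -> pos0 y -> pos0 (x + y).
Proof.
move=> px py.
case: (px) => [[x2 x1]|[x2 [p Pp xp]]|[x2 [q nPq xq]]]; first exact: pos0_add_base.
all: case: py => [[y2 y1]|[y2 [p' Pp' yp]]|[y2 [q' nPq' yq]]];
  first by rewrite addrC; apply: pos0_add_base.
- exact: pos0_add_pos xp yp.
- exact: pos0_add_mixed xp yq.
- by rewrite addrC; apply: pos0_add_mixed yp xq.
- exact: pos0_add_neg xq yq.
Qed.

Lemma pos0_total x : x <> 0 -> pos0 x \/ pos0 (- x).
Proof.
move=> nz; have [x2|x2] := eqVneq x.2 0.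
  have x1 : 0 <> x.1 by move=> x1; apply: nz; case: x x1 x2 => /= g l <- ->.
  case: (so_total so0 x1) => [x1_gt0|/(ov_oppr_gt0 ov0) Nx1_gt0].
  + by left; constructor 1.
  + by right; constructor 1; rewrite /= x2 oppr0.
set t := - (x.2^-1 *: x.1).
have xt : le0 0 (eval_at x t) by left; rewrite eval_at_root.
have Nxt : le0 0 (eval_at (- x) t) by left; rewrite eval_atN eval_at_root ?oppr0.
have [Pt|nPt] := classic (P t); case/orP: (lt_total x2) => x2_sgn.
- by right; constructor 2; split; [rewrite /= oppr_gt0 | exists t].
- by left; constructor 2; split; last exists t.
- by left; constructor 3; split; last exists t.
- by right; constructor 3; split; [rewrite /= oppr_lt0 | exists t].
Qed.

Lemma pos0Z (a : C) x : 0 < a -> pos0 x -> pos0 (a *: x).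
Proof.
move=> a0 [[x2 x1]|[x2 [p Pp xp]]|[x2 [q nPq xq]]].
- by constructor 1; rewrite /= x2 scaler0; split => //; apply: (ov_scale ov0).
- constructor 2; split; first exact: mulr_gt0.
  by exists p; rewrite // eval_atZ; apply: (ov_scale_ge0 ov0).
- constructor 3; split; first by rewrite /= pmulr_rlt0.
  by exists q; rewrite // eval_atZ; apply: (ov_scale_ge0 ov0).
Qed.

Lemma pos0_0 : ~ pos0 0.
Proof. by case=> [[_ /(so_irr so0)]|[]|[]] /=; rewrite ?ltxx. Qed.

Definition lt0' (x y : G') : Prop := pos0 (y - x).

Lemma ov_lt0' : ordered_vspace lt0'.
Proof. exact: ordered_vspace_cone pos0_0 pos0_add pos0_total pos0Z. Qed.

Let soinf0' := ltinf_sto (ov_sto ov_lt0').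

Lemma lt0'_j x y : lt0 x y -> lt0' (j x) (j y).
Proof. by move=> xy; constructor 1; rewrite /= subrr; split => //; apply/(ov_subr_gt0 ov0). Qed.

Lemma lt0'_j_h x : P x -> lt0' (j x) h.
Proof.
move=> Px; constructor 2; rewrite /= subr0; split; first exact: ltr01.
by exists x => //; left; rewrite /eval_at /= subr0 sub0r scale1r addNr.
Qed.

Lemma lt0'_h_j x : ~ P x -> lt0' h (j x).
Proof.
move=> nPx; constructor 3; split; first by rewrite /= sub0r oppr_lt0.
by exists x => //; left; rewrite /eval_at /= subr0 sub0r scaleN1r subrr.
Qed.

Definition h_leading (x : G') : Prop := x.2 != 0 /\ ~ dominant x.1.

(* The [<_1]-sign of [x] is that of its leading part, [x.2 h] or [x.1]. *)
Definition pos1 (x : G') : Prop :=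
  (h_leading x /\ 0 < x.2) \/ (~ h_leading x /\ lt1 0 x.1).

Lemma not_h_leading x : ~ h_leading x -> x.2 = 0 \/ dominant x.1.
Proof.
move=> nhx; have [x2|x2] := eqVneq x.2 0; [by left | right].
by apply: NNPP => ndx; apply: nhx.
Qed.

Lemma base_not_h_leading x : x.2 = 0 -> ~ h_leading x.
Proof. by move=> x2 []; rewrite x2 eqxx. Qed.

Lemma dominant_not_h_leading x : dominant x.1 -> ~ h_leading x.
Proof. by move=> dx []. Qed.

Lemma h_leading_h : h_leading h.
Proof. by split; [exact: oner_neq0 | exact: dominant0]. Qed.

Lemma h_leadingZ (a : C) x : a != 0 -> h_leading (a *: x) <-> h_leading x.
Proof. by move=> a0; rewrite /h_leading /= dominantZ // mulf_eq0 (negbTE a0). Qed.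

Lemma h_leadingN x : h_leading (- x) <-> h_leading x.
Proof. by rewrite -scaleN1r h_leadingZ // oppr_eq0 oner_eq0. Qed.

Lemma pos1_h_leading x : h_leading x -> pos1 x -> 0 < x.2.
Proof. by move=> hx [[]|[]]. Qed.

Lemma pos1_base x : ~ h_leading x -> pos1 x -> lt1 0 x.1.
Proof. by move=> nhx [[]|[]]. Qed.

Lemma pos1_add_h_leading x y : h_leading x -> 0 < x.2 -> pos1 y -> pos1 (x + y).
Proof.
move=> [_ ndx] x2 [[[_ ndy] y2]|[nhy y1]].
  left; split; last exact: addr_gt0.
  by split; [rewrite /= gt_eqF ?addr_gt0 | exact: not_dominantD].
have [dy|ndy] := classic (dominant y.1).
  right; split; rewrite /= addrC; last exact: dominantD_gt0.
  by case=> _; apply; apply: dominantD.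
have y2 : y.2 = 0 by case: (not_h_leading nhy).
left; split; last by rewrite /= y2 addr0.
by split; [rewrite /= y2 addr0 gt_eqF | exact: not_dominantD].
Qed.

Lemma pos1_add_base x y :
  ~ h_leading x -> lt1 0 x.1 -> ~ h_leading y -> lt1 0 y.1 -> pos1 (x + y).
Proof.
move=> nhx x1 nhy y1; right; split; last exact: (ov_addr_gt0 ov1).
case=> /= s2; apply.
case: (not_h_leading nhx) => [x2|dx]; last exact: dominant_addr_gt0.
case: (not_h_leading nhy) => [y2|dy]; last by rewrite addrC; apply: dominant_addr_gt0.
by move: s2; rewrite x2 y2 addr0 eqxx.
Qed.

Lemma pos1_add x y : pos1 x -> pos1 y -> pos1 (x + y).
Proof.
move=> px py.
case: (px) => [[hx x2]|[nhx x1]]; first exact: pos1_add_h_leading.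
case: (py) => [[hy y2]|[nhy y1]]; first by rewrite addrC; apply: pos1_add_h_leading.
exact: pos1_add_base.
Qed.

Lemma pos1_total x : x <> 0 -> pos1 x \/ pos1 (- x).
Proof.
move=> nz; have [hx|nhx] := classic (h_leading x).
  case/orP: (lt_total hx.1) => x2; [right | left]; left; split => //.
  - exact/h_leadingN.
  - by rewrite /= oppr_gt0.
have x1 : 0 <> x.1.
  move=> x1; apply: nz; case: (not_h_leading nhx) => [x2|]; last by rewrite -x1 => /dominant0.
  by case: x x1 x2 {nhx} => /= g l <- ->.
by case: (so_total so1 x1) => [x1_gt0|/(ov_oppr_gt0 ov1) Nx1_gt0];
  [left|right]; right; rewrite ?h_leadingN.
Qed.

Lemma pos1Z (a : C) x : 0 < a -> pos1 x -> pos1 (a *: x).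
Proof.
move=> a0; have hZ := h_leadingZ x (lt0r_neq0 a0).
case=> [[hx x2]|[nhx x1]]; [left|right]; rewrite hZ; split => //.
- exact: mulr_gt0.
- exact: (ov_scale ov1).
Qed.

Lemma pos1_0 : ~ pos1 0.
Proof. by case=> [[[]]|[_ /(so_irr so1)]] //=; rewrite eqxx. Qed.

Definition lt1' (x y : G') : Prop := pos1 (y - x).

Lemma ov_lt1' : ordered_vspace lt1'.
Proof. exact: ordered_vspace_cone pos1_0 pos1_add pos1_total pos1Z. Qed.

Lemma lt1'_j x y : lt1 x y -> lt1' (j x) (j y).
Proof.
move=> xy; right; split; last by apply/(ov_subr_gt0 ov1).
by apply: base_not_h_leading; rewrite /= subrr.
Qed.

Definition v' (x : G') : option G' :=
  if excluded_middle_informative (h_leading x) then Some h else omap j (v x.1).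

Lemma v'_h_leading x : h_leading x -> v' x = Some h.
Proof. by rewrite /v'; case: excluded_middle_informative. Qed.

Lemma v'_base x : ~ h_leading x -> v' x = omap j (v x.1).
Proof. by rewrite /v'; case: excluded_middle_informative. Qed.

Lemma v'_h : v' h = Some h.
Proof. exact: v'_h_leading h_leading_h. Qed.

Lemma v'_j g : v' (j g) = omap j (v g).
Proof. by rewrite v'_base //; apply: base_not_h_leading. Qed.

Lemma omap_j_le a b : leinf lt0 a b -> leinf lt0' (omap j a) (omap j b).
Proof.
by case=> [->|]; [left | case: a b => [x|] [y|] //= xy; right => //; apply: lt0'_j].
Qed.

Lemma v'_lt_h x : dominant x.1 -> ltinf lt0' (v' x) (Some h).
Proof.
move=> dx; rewrite v'_base; last exact: dominant_not_h_leading.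
by case: dx => u -> Pu; apply: lt0'_j_h.
Qed.

Lemma h_le_v' x : ~ dominant x.1 -> leinf lt0' (Some h) (v' x).
Proof.
move=> ndx; have [hx|nhx] := classic (h_leading x); first by rewrite v'_h_leading //; left.
rewrite v'_base //; right; case E: (v x.1) => [u|] //=.
by apply: lt0'_h_j => Pu; apply: ndx; exists u.
Qed.

Lemma v'_gt_h x : ~ leinf lt0' (v' x) (Some h) -> x.2 = 0 /\ ~ dominant x.1.
Proof.
move=> x_gt; have ndx : ~ dominant x.1 by move=> /v'_lt_h x_lt; apply: x_gt; right.
have nhx : ~ h_leading x by move=> /v'_h_leading hx; apply: x_gt; left.
by case: (not_h_leading nhx).
Qed.

Lemma v'_eq0 x : v' x = None <-> x = 0.
Proof.
have [hx|nhx] := classic (h_leading x).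
  by rewrite v'_h_leading //; split=> // x0; case: hx; rewrite x0 /= eqxx.
rewrite v'_base //; split.
- case E: (v x.1) => //= _; move/(hamel_v_eq0 hamelG): E => x1.
  case: (not_h_leading nhx) => [x2|]; last by rewrite x1 => /dominant0.
  by case: x x1 x2 {nhx} => /= g l -> ->.
- by move=> ->; rewrite /= (proj2 (hamel_v_eq0 hamelG 0)).
Qed.

Lemma v'_add x y : leinf lt0' (v' x) (v' (x + y)) \/ leinf lt0' (v' y) (v' (x + y)).
Proof.
have [dxy|ndxy] := classic (dominant (x + y).1).
  rewrite (v'_base (dominant_not_h_leading dxy)) /=.
  case: (hamel_v_add hamelG x.1 y.1) => le_v; [left|right];
    rewrite v'_base; try exact: omap_j_le le_v;
    exact/dominant_not_h_leading/(dominant_le le_v dxy).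
(* Now [h <= v' (x + y)]: unless [v' x] or [v' y] is at most [h], both [x]
   and [y] lie in [G], where the ultrametric inequality holds. *)
have h_le := h_le_v' ndxy.
have [x_le|/v'_gt_h [x2 ndx]] := classic (leinf lt0' (v' x) (Some h)).
  by left; apply: (so_le_trans soinf0') x_le h_le.
have [y_le|/v'_gt_h [y2 ndy]] := classic (leinf lt0' (v' y) (Some h)).
  by right; apply: (so_le_trans soinf0') y_le h_le.
rewrite !v'_base /=; try by apply: base_not_h_leading; rewrite /= ?x2 ?y2 ?addr0.
by case: (hamel_v_add hamelG x.1 y.1) => le_v; [left|right]; apply: omap_j_le.
Qed.

Lemma v'Z (a : C) x : a != 0 -> v' (a *: x) = v' x.
Proof.
move=> a0; have [hx|nhx] := classic (h_leading x).
  by rewrite !v'_h_leading // h_leadingZ.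
by rewrite !v'_base ?h_leadingZ //= (hamel_vZ hamelG).
Qed.

Lemma v_mono_dominant x y :
  pos1 x -> pos1 (y - x) -> dominant x.1 -> leinf lt0 (v y.1) (v x.1).
Proof.
move=> px pd dx; have x1 := pos1_base (dominant_not_h_leading dx) px.
have [dd|ndd] := classic (dominant (y - x).1).
  apply: (hamel_v_mono hamelG x1); apply/(ov_subr_gt0 ov1).
  exact: pos1_base (dominant_not_h_leading dd) pd.
by left; rewrite -(v_dominantD dx ndd) /= addrC subrK.
Qed.

Lemma h_leading_mono x y :
  pos1 x -> pos1 (y - x) -> h_leading x -> ~ dominant y.1 -> h_leading y.
Proof.
move=> px pd hx ndy; have x2 := pos1_h_leading hx px; case: hx => _ ndx.
split=> //; have [hd|nhd] := classic (h_leading (y - x)).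
  have := pos1_h_leading hd pd; rewrite /= subr_gt0 => lt_xy.
  by rewrite gt_eqF // (lt_trans x2 lt_xy).
case: (not_h_leading nhd) => [/= /eqP|dd]; first by rewrite subr_eq0 => /eqP ->; rewrite gt_eqF.
by case: ndy; have := dominantD dd ndx; rewrite /= subrK.
Qed.

Lemma v'_mono x y : lt1' 0 x -> lt1' x y -> leinf lt0' (v' y) (v' x).
Proof.
move=> x_gt0 xy; have y_gt0 := so_trans (ov_sto ov_lt1') x_gt0 xy.
rewrite /lt1' subr0 in x_gt0 y_gt0; rewrite /lt1' in xy.
have [dx|ndx] := classic (dominant x.1).
  have le_v := v_mono_dominant x_gt0 xy dx.
  rewrite !v'_base; [exact: omap_j_le | |]; apply: dominant_not_h_leading => //.
  exact: dominant_le le_v dx.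
have [dy|ndy] := classic (dominant y.1).
  by right; apply: (so_lt_le_trans soinf0') (v'_lt_h dy) (h_le_v' ndx).
have [hy|nhy] := classic (h_leading y); first by rewrite v'_h_leading //; apply: h_le_v'.
have [hx|nhx] := classic (h_leading x); first by case: nhy; apply: h_leading_mono hx ndy.
have [x2 y2] : x.2 = 0 /\ y.2 = 0.
  by split; [case: (not_h_leading nhx) | case: (not_h_leading nhy)].
rewrite !v'_base //; apply/omap_j_le/(hamel_v_mono hamelG (pos1_base nhx x_gt0)).
apply/(ov_subr_gt0 ov1); apply: pos1_base xy.
by apply: base_not_h_leading; rewrite /= x2 y2 subrr.
Qed.

Lemma v'_idem x : vinf v' (v' x) = v' x.
Proof.
have [hx|nhx] := classic (h_leading x); first by rewrite v'_h_leading //= v'_h.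
rewrite v'_base //; case E: (v x.1) => [u|] //=.
by rewrite v'_j (hamel_v_fixed hamelG E).
Qed.

Lemma v'_gt0 x : ltinf lt1' (Some 0) (v' x).
Proof.
have [hx|nhx] := classic (h_leading x).
  by rewrite v'_h_leading //=; left; rewrite subr0; split; [exact: h_leading_h | exact: ltr01].
rewrite v'_base //; case E: (v x.1) => [u|] //=.
right; rewrite subr0; split; first exact: base_not_h_leading.
by have := hamel_v_gt0 hamelG x.1; rewrite E.
Qed.

Lemma hamel_G' : is_hamel lt0' lt1' v'.
Proof.
split; first exact: ov_lt0'. split; first exact: ov_lt1'.
split; first exact: v'_eq0. split; first exact: v'_add.
split; first exact: v'Z. split; first exact: v'_mono.
split; [exact: v'_idem | exact: v'_gt0].
Qed.

Lemma j_embedding : hamel_embedding lt0 lt1 v lt0' lt1' v' j.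
Proof.
split.
- by move=> a x y; rewrite /j; congr pair; rewrite /= ?scaler0 ?addr0.
- by move=> x y [].
- exact: lt0'_j.
- exact: lt1'_j.
- by move=> x; rewrite v'_j.
Qed.

Section UniversalProperty.
Variables (Gs : lmodType C) (mu0 mu1 : Gs -> Gs -> Prop) (vs : Gs -> option Gs).
Hypothesis hamelGs : is_hamel mu0 mu1 vs.
Variable i : G -> Gs.
Hypothesis i_emb : hamel_embedding lt0 lt1 v mu0 mu1 vs i.
Variable hs : Gs.
Hypotheses (P_lt_hs : forall x, P x -> mu0 (i x) hs) (vs_hs : vs hs = Some hs)
  (hs_lt_nP : forall x, ~ P x -> mu0 hs (i x)).

Let ovs0 := hamel_ov0 hamelGs.
Let ovs1 := hamel_ov1 hamelGs.

Definition i' (x : G') : Gs := i x.1 + x.2 *: hs.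

Lemma i'_linear (a : C) x y : i' (a *: x + y) = a *: i' x + i' y.
Proof.
rewrite /i' /= (embD i_emb) (embZ i_emb) scalerDl scalerDr scalerA.
by rewrite addrACA.
Qed.

Lemma i'B x y : i' (x - y) = i' x - i' y.
Proof. by have := i'_linear (-1) y x; rewrite !scaleN1r addrC [- _ + _]addrC. Qed.

Lemma i'_j g : i' (j g) = i g.
Proof. by rewrite /i' /= scale0r addr0. Qed.

Lemma i'_h : i' h = hs.
Proof. by rewrite /i' /= (emb0 i_emb) add0r scale1r. Qed.

Lemma i'_eval x w : i' x = i (eval_at x w) + x.2 *: (hs - i w).
Proof.
rewrite /i' /eval_at (embD i_emb) (embZ i_emb) scalerBr -addrA.
by congr (_ + _); rewrite addrC subrK.
Qed.

Lemma hs_notin_image t : i t <> hs.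
Proof.
move=> its; have [Pt|nPt] := classic (P t); [have := P_lt_hs Pt | have := hs_lt_nP nPt];
  by rewrite its; apply: (so_irr (ov_sto ovs0)).
Qed.

Lemma i'_eq0 x : i' x = 0 -> x = 0.
Proof.
case: x => g l; rewrite /i' /= => /eqP; rewrite addr_eq0 => /eqP ig.
have [l0|l0] := eqVneq l 0.
  by move: ig; rewrite l0 scale0r oppr0 -(emb0 i_emb) => /(emb_inj i_emb) ->.
case: (hs_notin_image (t := - (l^-1 *: g))).
by rewrite -scaleNr (embZ i_emb) ig scalerN scaleNr opprK scalerA mulVf // scale1r.
Qed.

Lemma i'_pos0 x : pos0 x -> mu0 0 (i' x).
Proof.
have emb_ge0 e : le_of lt0 0 e -> le_of mu0 0 (i e).
  by move/(emb_le0 i_emb); rewrite (emb0 i_emb).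
case=> [[x2 x1]|[x2 [p Pp xp]]|[x2 [q nPq xq]]].
- by rewrite /i' x2 scale0r addr0 -(emb0 i_emb); apply: (emb_lt0 i_emb).
- rewrite (i'_eval x p) addrC; apply: (ov_addr_gt0_ge0 ovs0); last exact: emb_ge0.
  by apply: (ov_scale ovs0) => //; apply/(ov_subr_gt0 ovs0)/P_lt_hs.
- rewrite (i'_eval x q) addrC; apply: (ov_addr_gt0_ge0 ovs0); last exact: emb_ge0.
  have := ov_scale_lt_neg ovs0 x2 (_ : mu0 (hs - i q) 0); rewrite scaler0; apply.
  by apply/(ov_oppr_gt0 ovs0); rewrite opprB; apply/(ov_subr_gt0 ovs0)/hs_lt_nP.
Qed.

Lemma vs_scale_hs l : l != 0 -> vs (l *: hs) = Some hs.
Proof. by move=> l0; rewrite (hamel_vZ hamelGs). Qed.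

Lemma vs_i_lt_hs g : dominant g -> ltinf mu0 (vs (i g)) (Some hs).
Proof. by case=> u vg Pu; rewrite -(emb_v i_emb) vg /=; apply: P_lt_hs. Qed.

Lemma hs_lt_vs_i g : ~ dominant g -> ltinf mu0 (Some hs) (vs (i g)).
Proof.
move=> ndg; rewrite -(emb_v i_emb); case E: (v g) => [u|] //=.
by apply: hs_lt_nP => Pu; apply: ndg; exists u.
Qed.

Lemma i'_pos1 x : pos1 x -> mu1 0 (i' x).
Proof.
case=> [[[x2 ndx] x2_gt0]|[nhx x1]].
  rewrite /i' addrC; apply: (hamel_gt0_addl hamelGs).
    by apply: (ov_scale ovs1) => //; have := hamel_v_gt0 hamelGs hs; rewrite vs_hs.
  by rewrite vs_scale_hs //; apply: hs_lt_vs_i.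
have ix1 : mu1 0 (i x.1) by rewrite -(emb0 i_emb); apply: (emb_lt1 i_emb).
rewrite /i'; have [->|x2] := eqVneq x.2 0; first by rewrite scale0r addr0.
have dx : dominant x.1 by apply: NNPP => ndx; apply: nhx.
by apply: (hamel_gt0_addl hamelGs) ix1 _; rewrite vs_scale_hs //; apply: vs_i_lt_hs.
Qed.

Lemma i'_v x : omap i' (v' x) = vs (i' x).
Proof.
have [hx|nhx] := classic (h_leading x).
  case: (hx) => x2 ndx; rewrite v'_h_leading //= i'_h /i' addrC.
  by rewrite (hamel_v_addl hamelGs) vs_scale_hs //; apply: hs_lt_vs_i.
rewrite v'_base //.
have -> : omap i' (omap j (v x.1)) = vs (i x.1).
  by rewrite -(emb_v i_emb); case: (v x.1) => //= u; rewrite i'_j.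
rewrite /i'; have [->|x2] := eqVneq x.2 0; first by rewrite scale0r addr0.
have dx : dominant x.1 by apply: NNPP => ndx; apply: nhx.
by rewrite (hamel_v_addl hamelGs) // vs_scale_hs //; apply: vs_i_lt_hs.
Qed.

Lemma i'_embedding : hamel_embedding lt0' lt1' v' mu0 mu1 vs i'.
Proof.
split.
- exact: i'_linear.
- move=> x y e; apply/eqP; rewrite -subr_eq0; apply/eqP/i'_eq0.
  by rewrite i'B e subrr.
- by move=> x y /i'_pos0; rewrite i'B => /(ov_subr_gt0 ovs0).
- by move=> x y /i'_pos1; rewrite i'B => /(ov_subr_gt0 ovs1).
- exact: i'_v.
Qed.

End UniversalProperty.

End CutExtension.

Theorem lemma4p5 (C : realFieldType) (G : lmodType C)
    (lt0 lt1 : G -> G -> Prop) (v : G -> option G) :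
  is_hamel lt0 lt1 v ->
  forall P : G -> Prop,
  (forall x y, P y -> lt0 x y -> P x) ->
  exists (G' : lmodType C) (lt0' lt1' : G' -> G' -> Prop)
         (v' : G' -> option G') (j : G -> G') (h : G'),
    is_hamel lt0' lt1' v' /\
    hamel_embedding lt0 lt1 v lt0' lt1' v' j /\
    v' h = Some h /\
    (forall x, P x -> lt0' (j x) h) /\
    (forall x, ~ P x -> lt0' h (j x)) /\
        (forall (Gs : lmodType C) (mu0 mu1 : Gs -> Gs -> Prop)
                (vs : Gs -> option Gs),
           is_hamel mu0 mu1 vs ->
           forall (i : G -> Gs),
           hamel_embedding lt0 lt1 v mu0 mu1 vs i ->
           forall hs : Gs,
           (forall x, P x -> mu0 (i x) hs) ->
           vs hs = Some hs ->
           (forall x, ~ P x -> mu0 hs (i x)) ->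
           exists i' : G' -> Gs,
             [/\ hamel_embedding lt0' lt1' v' mu0 mu1 vs i',
                 (forall x, i' (j x) = i x) &
                 i' h = hs]).
Proof.
move=> hamelG P P_down.
exists (G' G), (lt0' lt0 P), (lt1' lt1 v P), (v' v P), (@j _ G), (@h _ G).
split; first exact (hamel_G' hamelG P_down).
split; first exact (j_embedding hamelG P).
split; first exact (v'_h hamelG P).
split; first exact: lt0'_j_h.
split; first exact: lt0'_h_j.
move=> Gs mu0 mu1 vs hamelGs i i_emb hs P_lt_hs vs_hs hs_lt_nP.
exists (i' i hs); split.
- exact (i'_embedding hamelGs i_emb P_lt_hs vs_hs hs_lt_nP).
- exact (i'_j i hs).
- exact (i'_h i_emb hs).
Qed.
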